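(* For any given natural number $m$, the Goodstein sequence $G(m)$ converges (i.e. reaches $0$ after finitely many terms) if and only if it is bounded, i.e. there is a natural number $B$ with $G(n,m)\le B$ for all terms $G(n,m)$ of $G(m)$.
   Context: For a natural number base $b>1$, the hereditary representation $m\langle b\rangle$ of a natural number $m$ is its expression as $\sum_{i=0}^{l} a_i b^{i}$ with $0\le a_i<b$, $a_l\neq 0$, where every exponent is itself written in hereditary representation in base $b$, recursively. The partial Goodstein operation sends $m$ (in base $b$) to $m\langle b\rangle''$, obtained by syntactically replacing every occurrence of $b$ by $b+1$ in $m\langle b\rangle$. The Goodstein sequence $G(m)$ of $m$ is $\{m,\ m''-1,\ (m''-1)''-1,\ \dots\}$, starting from the hereditary representation of $m$ in base $2$; its $n$-th term is $G(n,m)$, with $G(1,m)=m$ in base $2$, $G(k,m)$ written in base $k+1$, and $G(k+1,m)=G(k,m)\langle k+1\rangle''-1$; the sequence stops once a term equals $0$. *)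

From mathcomp Require Import all_boot.
Set Implicit Arguments. Unset Strict Implicit. Unset Printing Implicit Defensive.

(* [bump_fuel fuel b m]: write m in hereditary base-b representation
   m = sum_i a_i b^i (0 <= a_i < b), exponents i themselves hereditary,
   and replace every occurrence of b by b+1.  The digit a_i of m is
   (m %/ b^i) %% b; the term a_i * b^i becomes a_i * (b+1)^(bump i).
   The fuel bounds the recursion depth; fuel m.+1 suffices for m
   (all exponents i with nonzero digit satisfy i < m when b >= 2). *)
Fixpoint bump_fuel (fuel b m : nat) : nat :=
  match fuel with
  | 0 => 0
  | f.+1 =>
      let fix digits (k q i : nat) : nat :=
        match k with
        | 0 => 0
        | k'.+1 => (q %% b) * (b.+1) ^ (bump_fuel f b i) + digits k' (q %/ b) i.+1
        end
      in digits m m 0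
  end.

Definition hbump (b m : nat) : nat := bump_fuel m.+1 b m.

(* G(n,m): G(1,m) = m (base 2); G(k,m) is written in base k+1 and
   G(k+1,m) = G(k,m)<k+1>'' - 1.  G 0 m is a dummy value (= m). Once a
   term is 0, all later values are 0 (truncated subtraction), i.e. the
   sequence has stopped. *)
Fixpoint goodstein (n m : nat) : nat :=
  match n with
  | 0 => m
  | 1 => m
  | k.+1 => hbump k.+1 (goodstein k m) - 1
  end.

From mathcomp Require Import all_boot.
Set Implicit Arguments. Unset Strict Implicit. Unset Printing Implicit Defensive.

(* A term of a Goodstein sequence that is smaller than its base is a single
   digit, so the base change leaves it alone and from then on the sequence
   just counts down by one per step.  A sequence bounded by B has such a term
   as soon as the base exceeds B, hence reaches 0.  Conversely, a sequence
   that reaches 0 stays at 0 and is bounded by its finitely many earlier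
   terms. *)

Definition hdigits (f b : nat) :=
  fix digits (k q i : nat) : nat :=
    match k with
    | 0 => 0
    | k'.+1 => (q %% b) * (b.+1) ^ (bump_fuel f b i) + digits k' (q %/ b) i.+1
    end.

Lemma bump_fuelS f b m : bump_fuel f.+1 b m = hdigits f b m m 0.
Proof. by []. Qed.

Lemma hdigits0 f b k i : hdigits f b k 0 i = 0.
Proof. by elim: k i => [|k IHk] i //=; rewrite mod0n div0n IHk. Qed.

Lemma hbump0 b : hbump b 0 = 0.
Proof. by []. Qed.

Lemma hbump_small b x : x < b -> hbump b x = x.
Proof.
rewrite /hbump bump_fuelS; case: x => [|x] xb //=.
rewrite divn_small // hdigits0 modn_small // addn0.
by case: x xb => [|x] xb /=; rewrite expn0 muln1.
Qed.

Lemma goodsteinS k m : 1 <= k -> goodstein k.+1 m = hbump k.+1 (goodstein k m) - 1.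
Proof. by case: k. Qed.

Lemma goodstein_stays0 n k m :
  1 <= n -> n <= k -> goodstein n m = 0 -> goodstein k m = 0.
Proof.
move=> n_gt0 /subnKC <- Gn0; elim: (k - n) => [|j IHj]; first by rewrite addn0.
by rewrite addnS goodsteinS ?IHj ?hbump0 // (leq_trans n_gt0 (leq_addr _ _)).
Qed.

(* The k-th term is written in base k+1, so [goodstein k m <= k] says it is a
   single digit. *)
Lemma goodstein_countdown k j m :
  1 <= k -> goodstein k m <= k -> goodstein (k + j) m = goodstein k m - j.
Proof.
move=> k_gt0 Gk_small; elim: j => [|j IHj]; first by rewrite addn0 subn0.
have below_base : goodstein (k + j) m < (k + j).+1.
  by rewrite IHj ltnS (leq_trans (leq_subr _ _)) // (leq_trans Gk_small (leq_addr _ _)).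
rewrite addnS goodsteinS ?(leq_trans k_gt0 (leq_addr _ _)) //.
by rewrite hbump_small // IHj subn1 subnS.
Qed.

Theorem mainTheorem2 (m : nat) :
  (exists n, 1 <= n /\ goodstein n m = 0) <->
  (exists B, forall n, 1 <= n -> goodstein n m <= B).
Proof.
split=> [[n [n_gt0 Gn0]] | [B bounded]].
- exists (\max_(i < n) goodstein i m) => k k_gt0.
  case: (ltnP k n) => [k_lt_n | n_le_k].
    exact: (leq_bigmax_cond (Ordinal k_lt_n)).
  by rewrite (goodstein_stays0 n_gt0 n_le_k Gn0).
- exists (B.+1 + B); split; first by rewrite addSn.
  rewrite goodstein_countdown //; last by rewrite leqW ?bounded.
  by apply/eqP; rewrite subn_eq0 bounded.
Qed.
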